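(* Let $X$ be a Polish space and $T$ a continuous self-map of $X$ admitting an invariant Borel probability measure $m$. Let $\mathbf G$ be a compact abelian group acting continuously on $X$, and assume that $T(gx)=\beta(g)T(x)$ for all $g\in\mathbf G$ and $x\in X$, where $\beta:\mathbf G\to\mathbf G$ is a continuous map preserving the Haar measure of $\mathbf G$. Define $\widetilde m(A)=\int_{\mathbf G}m(g^{-1}A)\,dg$ for Borel $A\subseteq X$, where $dg$ is the normalized Haar measure. Then $\widetilde m$ is $\mathbf G$-invariant, and for every $g\in\mathbf G$ it is invariant under both maps $x\mapsto gT(x)$ and $x\mapsto T(gx)$.
   Context: A measure $m$ is invariant under a Borel map $S$ if $m(S^{-1}A)=m(A)$ for all Borel $A$; $\mathbf G$-invariance means $\widetilde m(gA)=\widetilde m(A)$ for all $g$ and Borel $A$. *)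

From HB Require Import structures.
From mathcomp Require Import all_boot all_order all_algebra.
From mathcomp Require Import all_classical all_reals all_analysis.
Set Implicit Arguments. Unset Strict Implicit. Unset Printing Implicit Defensive.
Import Order.TTheory GRing.Theory Num.Theory.
Local Open Scope classical_set_scope.
Local Open Scope ring_scope.

Notation borel T := (@g_sigma_algebraType T (@open T)).

(* A topological abelian group is pointed by 0; this alias lets us form its
   Borel sigma-algebra (the library's generated sigma-algebra needs a pointed
   carrier). *)
Definition pgrp (G : topologicalZmodType) : Type := G.
HB.instance Definition _ (G : topologicalZmodType) := Choice.on (pgrp G).
HB.instance Definition _ (G : topologicalZmodType) :=
  isPointed.Build (pgrp G) (0 : G).
Notation borelG G := (@g_sigma_algebraType (pgrp G) (@open G)).

Definition separable_space (T : topologicalType) : Prop :=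
  exists D : set T, countable D /\ closure D = setT.

(* A Polish space is represented as a complete metric space (Hausdorff, so the
   pseudometric is a metric) which is separable. *)
Definition polish (R : realType) (X : completePseudoMetricType R) : Prop :=
  hausdorff_space X /\ separable_space X.

Definition haar_prob (R : realType) (G : topologicalZmodType)
    (mu : probability (borelG G) R) : Prop :=
  [/\ (forall (g : G) (A : set (borelG G)), measurable A ->
          mu [set g + (a : G) | a in A] = mu A),
      (forall A : set (borelG G), measurable A ->
          mu A = ereal_inf [set mu U | U in [set U : set G | open U /\ A `<=` U]]) &
      (forall U : set G, open U ->
          mu U = ereal_sup [set mu K | K in [set K : set G | compact K /\ K `<=` U]])].

(* The averaged measure  m~(A) = \int_G m(g^{-1} A) dg ;
   note g^{-1}A = { x | g x \in A } = act g @^-1` A. *)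
Definition mtilde (R : realType) (G : topologicalZmodType) (X : ptopologicalType)
    (act : G -> X -> X) (mu : probability (borelG G) R)
    (m : probability (borel X) R) (A : set X) : \bar R :=
  (\int[mu]_(g in [set: borelG G]) m (act g @^-1` A))%E.

From HB Require Import structures.
From mathcomp Require Import all_boot all_order all_algebra.
From mathcomp Require Import all_classical all_reals all_analysis.
From mathcomp Require Import measurable_realfun lra.
Import Order.TTheory GRing.Theory Num.Theory.
Local Open Scope classical_set_scope.
Local Open Scope ring_scope.

(* The averaged measure m~ is a Haar average of the translates of m, so each
   invariance is a change of variables h |-> phi h in the Haar integral of
   h |-> m (h^-1 A).  Translating A by g replaces h by -g + h; by the
   intertwining relation T (h x) = beta h (T x) and the T-invariance of m, the
   preimages of A under x |-> g T x and x |-> T (g x) replace h by g + beta h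
   and beta (g + h) respectively.  Translations and beta preserve the Haar
   measure, hence so do these maps.  The only analytic input is the joint
   measurability of the action, which makes h |-> m (h^-1 A) measurable; it
   follows from continuity and the separability of X. *)

Lemma countable_bigcup_measurable d (T : sigmaRingType d) I (P : set I)
    (F : I -> set T) :
  countable P -> (forall i, P i -> measurable (F i)) ->
  measurable (\bigcup_(i in P) F i).
Proof.
move=> cP mF; rewrite bigcup_set_type; apply: countable_bigcupT_measurable.
  by rewrite (eq_countable (card_setT _)).
by move=> i; apply: mF; exact: set_valP.
Qed.

(* The Borel sets of S * X may be more than the products of Borel sets;
   separability of X is what makes open sets countable unions of open
   rectangles. *)
Section open_setX_separable.
Context {R : realType} {S : topologicalType} {X : pseudoMetricType R}.
Context {D : set X}.
Hypothesis dense_D : closure D = setT.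

Lemma open_setX_bigcup_rectangles (W : set (S * X)) : open W ->
  exists V : X * nat -> set S, (forall i, open (V i)) /\
    W = \bigcup_(i in D `*` [set: nat]) (V i `*` (ball i.1 i.2.+1%:R^-1)°).
Proof.
move=> oW.
pose r (n : nat) : R := n.+1%:R^-1.
exists (fun i =>
  \bigcup_(O in [set O | open O /\ O `*` (ball i.1 (r i.2))° `<=` W]) O).
split=> [i|]; first by apply: bigcup_open => O [].
apply/seteqP; split; last first.
  by move=> [g x] [i _] [] [U [_ sUW] Ug] xi; exact: (sUW (g, x)).
move=> [g x] Wgx.
have [[A B] /= [nA nB] sABW] := oW (g, x) Wgx.
have /nbhs_ballP[e /= e0 eB] := nB.
(* With 2 r < e and c in D at distance < r / 2 of x, the point x lies in the
   interior of ball c r, and ball c r is contained in ball x e. *)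
have [n nr] : exists n, r n < e / 2.
  exists (Num.truncn (e / 2)^-1).
  by rewrite /r -ltf_pV2 ?(posrE, divr_gt0) // invrK truncnS_gt.
have r0 : 0 < r n by rewrite invr_gt0.
have r20 : 0 < r n / 2 by rewrite divr_gt0.
have [c [Dc xc]] : exists c, D c /\ ball x (r n / 2) c.
  have : closure D x by rewrite dense_D.
  by move/(_ _ (nbhsx_ballx x _ r20)).
exists (c, n) => //; split.
  exists A°; last exact: nA.
  split=> [|[g' y] [/interior_subset Ag' /interior_subset cy]].
    exact: open_interior.
  apply: sABW; split=> //; apply: eB.
  by apply: le_ball (ball_triangle xc cy); lra.
apply/nbhs_ballP; exists (r n / 2) => //= y xy.
by rewrite [X in ball _ X]splitr; apply: ball_triangle (ball_sym xc) xy.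
Qed.

End open_setX_separable.

Lemma continuous_measurable_fun_borelG (G : topologicalZmodType) (f : G -> G) :
  continuous f -> measurable_fun setT (f : borelG G -> borelG G).
Proof.
move=> cf; apply: (@measurability _ _ _ (borelG G) _ _ (@open G)) => //.
move=> _ [U oU <-].
by rewrite setTI; apply: sub_gen_smallest; exact: (proj1 (continuousP _) cf).
Qed.

Section borel_product_separable.
Context {R : realType} {G : topologicalZmodType} {X : pseudoPMetricType R}.
Hypothesis sepX : separable_space X.

Lemma open_measurable_borelGX (W : set (G * X)) : open W ->
  measurable (W : set (borelG G * borel X)).
Proof.
have [D [cD dD]] := sepX.
move=> /(open_setX_bigcup_rectangles dD)[V [oV ->]].
apply: countable_bigcup_measurable => [|i _]; first exact: countableX.
by apply: measurableX; apply: sub_gen_smallest => //; exact: open_interior.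
Qed.

Lemma continuous_measurable_fun_borelGX {Y : ptopologicalType}
    (f : G * X -> Y) :
  continuous f -> measurable_fun setT (f : borelG G * borel X -> borel Y).
Proof.
move=> cf; apply: (@measurability _ _ _ (borel Y) _ _ (@open Y)) => //.
move=> _ [U oU <-]; rewrite setTI; apply: open_measurable_borelGX.
exact: (proj1 (continuousP _) cf).
Qed.

End borel_product_separable.

Definition measure_preserving {R : realType} {d1 d2 : measure_display}
    {T1 : measurableType d1} {T2 : measurableType d2}
    (mu : set T1 -> \bar R) (nu : set T2 -> \bar R) (phi : T1 -> T2) : Prop :=
  measurable_fun setT phi /\ forall B, measurable B -> mu (phi @^-1` B) = nu B.

Section measure_preserving.
Context {R : realType} {d1 d2 d3 : measure_display}.
Context {T1 : measurableType d1} {T2 : measurableType d2}.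
Context {T3 : measurableType d3}.
Local Open Scope ereal_scope.

Lemma measure_preserving_comp {mu : set T1 -> \bar R} {nu : set T2 -> \bar R}
    {rho : set T3 -> \bar R} {phi : T1 -> T2} {psi : T2 -> T3} :
  measure_preserving mu nu phi -> measure_preserving nu rho psi ->
  measure_preserving mu rho (psi \o phi).
Proof.
move=> [mphi phiP] [mpsi psiP]; split; first exact: measurableT_comp.
move=> B mB; rewrite comp_preimage phiP ?psiP //.
by rewrite -[_ @^-1` _]setTI; exact: mpsi.
Qed.

Lemma ge0_integral_measure_preserving (mu : {measure set T1 -> \bar R})
    (nu : {measure set T2 -> \bar R}) (phi : T1 -> T2) (F : T2 -> \bar R) :
  measure_preserving mu nu phi -> measurable_fun [set: T2] F ->
  (forall y, 0 <= F y) ->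
  \int[mu]_x F (phi x) = \int[nu]_y F y.
Proof.
move=> [mphi phiP] mF F0.
rewrite [RHS](eq_measure_integral (pushforward mu phi)) => [|B mB _].
  by rewrite (ge0_integral_pushforward mphi).
exact/esym/phiP.
Qed.

End measure_preserving.

Lemma haar_prob_preserving_add {R : realType} {G : topologicalZmodType}
    {mu : probability (borelG G) R} :
  haar_prob mu -> forall g : G, measure_preserving mu mu (fun h : G => g + h).
Proof.
move=> [mu_addr _ _] g; split.
  apply: continuous_measurable_fun_borelG => h.
  apply: (@continuous_comp _ _ _ (pair g) (fun z : G * G => z.1 + z.2)).
    by apply: cvg_pair; [exact: cvg_cst | exact: cvg_id].
  exact: add_continuous.
move=> B mB; rewrite -(mu_addr (- g) B mB); congr (mu _).
apply/seteqP; split=> [h Bgh|_ [h Bh <-] /=]; last by rewrite addNKr.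
by exists (g + h); rewrite ?addKr.
Qed.

Section averaged_measure.
Context {R : realType} {X : ptopologicalType} {G : topologicalZmodType}.
Context {act : G -> X -> X} {mu : probability (borelG G) R}.
Context {m : probability (borel X) R}.
Hypothesis act_measurable :
  measurable_fun setT (fun p : borelG G * borel X => (act p.1 p.2 : borel X)).

Let act_preimage_measurable (A : set (borel X)) : measurable A ->
  measurable ((fun p : borelG G * borel X => act p.1 p.2) @^-1` A).
Proof.
by move=> mA; rewrite -[X in measurable X]setTI; exact: act_measurable.
Qed.

Lemma measurable_preimage_act (h : G) (A : set (borel X)) : measurable A ->
  measurable (act h @^-1` A : set (borel X)).
Proof.
move=> /act_preimage_measurable /(measurable_xsection (h : borelG G)).
by rewrite xsectionE.
Qed.

Lemma measurable_fun_measure_preimage_act (A : set (borel X)) : measurable A ->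
  measurable_fun setT (fun h : borelG G => m (act h @^-1` A)).
Proof.
move=> /act_preimage_measurable /(measurable_fun_xsection m).
by apply: eq_measurable_fun => h _ /=; rewrite xsectionE.
Qed.

Lemma mtilde_measure_preserving {phi : G -> G} {A B : set (borel X)} :
  measure_preserving mu mu phi -> measurable A ->
  (forall h, m (act h @^-1` B) = m (act (phi h) @^-1` A)) ->
  mtilde act mu m B = mtilde act mu m A.
Proof.
move=> phiP mA BA; rewrite /mtilde; under eq_integral do rewrite BA.
rewrite (ge0_integral_measure_preserving mu mu phi
  (fun h => m (act h @^-1` A)) phiP) //.
exact: measurable_fun_measure_preimage_act.
Qed.

End averaged_measure.

Lemma image_act_preimage (G : zmodType) (X : Type) (act : G -> X -> X) :
  (forall x, act 0 x = x) -> (forall g h x, act (g + h) x = act g (act h x)) ->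
  forall g A, [set act g a | a in A] = act (- g) @^-1` A.
Proof.
move=> act0 actD g A; apply/seteqP; split=> [_ [a Aa <-]|x Ax] /=.
  by rewrite -actD addNr act0.
by exists (act (- g) x); rewrite // -actD subrr act0.
Qed.

Theorem proposition6p1 (R : realType)
  (X : completePseudoMetricType R) (hX : polish X)
  (T : X -> X) (hTc : continuous T)
  (m : probability (borel X) R)
  (hm : forall A : set (borel X), measurable A -> m (T @^-1` A) = m A)
  (G : topologicalZmodType) (hGc : compact [set: G]) (hGh : hausdorff_space G)
  (act : G -> X -> X)
  (hact_cont : continuous (fun p : G * X => act p.1 p.2))
  (hact0 : forall x, act 0 x = x)
  (hactD : forall g h x, act (g + h) x = act g (act h x))
  (mu : probability (borelG G) R) (hmu : haar_prob mu)
  (beta : G -> G) (hbc : continuous beta)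
  (hbeta : forall B : set (borelG G), measurable B -> mu (beta @^-1` B) = mu B)
  (hTeq : forall g x, T (act g x) = act (beta g) (T x)) :
  (forall (g : G) (A : set (borel X)), measurable A ->
     mtilde act mu m [set act g a | a in A] = mtilde act mu m A) /\
  (forall (g : G) (A : set (borel X)), measurable A ->
     mtilde act mu m ((fun x => act g (T x)) @^-1` A) = mtilde act mu m A) /\
  (forall (g : G) (A : set (borel X)), measurable A ->
     mtilde act mu m ((fun x => T (act g x)) @^-1` A) = mtilde act mu m A).
Proof.
have [_ sepX] := hX.
have act_measurable := continuous_measurable_fun_borelGX sepX _ hact_cont.
have addP := haar_prob_preserving_add hmu.
have betaP : measure_preserving mu mu beta.
  by split=> //; exact: continuous_measurable_fun_borelG.
have mT (B : set (borel X)) (h : G) :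
    measurable B -> m (T @^-1` (act h @^-1` B)) = m (act h @^-1` B).
  by move=> mB; apply: hm; exact: measurable_preimage_act act_measurable _ _ mB.
split; [|split] => g A mA.
- apply: (mtilde_measure_preserving act_measurable (addP (- g)) mA) => h.
  rewrite image_act_preimage //; congr (m _).
  by apply/funext => x /=; rewrite hactD.
- apply: (mtilde_measure_preserving act_measurable
    (measure_preserving_comp betaP (addP g)) mA) => h.
  rewrite -(mT A) //; congr (m _).
  by apply/funext => x /=; rewrite hTeq hactD.
- apply: (mtilde_measure_preserving act_measurable
    (measure_preserving_comp (addP g) betaP) mA) => h.
  rewrite -(mT A) //; congr (m _).
  by apply/funext => x /=; rewrite -hactD hTeq.
Qed.
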